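(* Let $T=(V,E)$ be a tree with $\mathrm{pthin}(T)=2$, and let $\sigma$ be an ordering of $V$ and $S=\{V^0,V^1\}$ a partition of $V$ that are strongly consistent. Let $v_1,v_2,v_3$ be vertices with $v_1<v_2<v_3$ and $\deg(v_2)=3$. Then either the unique simple path from $v_1$ to $v_3$ passes through $v_2$, or some vertex of that path is adjacent to $v_2$.
   Context: For a graph $G=(V,E)$, a linear ordering $<$ of $V$ and a partition of $V$ into classes are called strongly consistent if for every triple $r<s<t$ of vertices with $rt\in E$: if $r$ and $s$ belong to the same class then $st\in E$, and if $s$ and $t$ belong to the same class then $rs\in E$. The proper thinness $\mathrm{pthin}(G)$ is the minimum $k$ such that some ordering and some partition into $k$ classes are strongly consistent. *)

From mathcomp Require Import all_boot.
Set Implicit Arguments. Unset Strict Implicit. Unset Printing Implicit Defensive.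

Definition simple_graph (T : finType) (e : rel T) : Prop :=
  symmetric e /\ irreflexive e.

Definition simple_path (T : finType) (e : rel T) (u v : T) (p : seq T) : Prop :=
  [/\ path e u p, last u p = v & uniq (u :: p)].

Definition connected_graph (T : finType) (e : rel T) : Prop :=
  forall u v : T, connect e u v.

Definition has_cycle (T : finType) (e : rel T) : Prop :=
  exists (x : T) (p : seq T),
    [/\ 2 <= size p, path e x p, uniq (x :: p) & e (last x p) x].

Definition is_tree (T : finType) (e : rel T) : Prop :=
  [/\ simple_graph e, connected_graph e & ~ has_cycle e].

Definition deg (T : finType) (e : rel T) (v : T) : nat := #|[set w | e v w]|.

(* A linear ordering of V is given by an injective map ord : T -> nat
   (r < s iff ord r < ord s); a partition into k classes by cls : T -> 'I_k. *)
Definition strongly_consistent (T : finType) (e : rel T) (k : nat)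
    (ord : T -> nat) (cls : T -> 'I_k) : Prop :=
  injective ord /\
  forall r s t : T, ord r < ord s -> ord s < ord t -> e r t ->
    (cls r = cls s -> e s t) /\ (cls s = cls t -> e r s).

Definition pthin_le (T : finType) (e : rel T) (k : nat) : Prop :=
  exists (ord : T -> nat) (cls : T -> 'I_k), strongly_consistent e ord cls.

Lemma pthin_exists (T : finType) (e : rel T) : exists k, pthin_le e k.
Proof.
exists #|T|; exists (fun x => nat_of_ord (enum_rank x)), (@enum_rank T).
split.
  move=> x y H; apply: enum_rank_inj; exact: val_inj.
move=> r s t rs st _; split=> [/enum_rank_inj E|/enum_rank_inj E].
  by move: rs; rewrite E ltnn.
by move: st; rewrite E ltnn.
Qed.

Definition pthin_eq (T : finType) (e : rel T) (k : nat) : Prop :=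
  pthin_le e k /\ forall j, j < k -> ~ pthin_le e j.

From mathcomp Require Import all_boot.

Set Implicit Arguments.
Unset Strict Implicit.
Unset Printing Implicit Defensive.

(* If v2 avoids the v1-v3 path and all its neighbours, the path has an edge
   r t jumping over v2 with r, t not adjacent to v2.  Strong consistency then
   forces r and t into the class not containing v2, and every neighbour of v2
   into the class of v2 (otherwise a triangle or an adjacency to v2 appears).
   Two neighbours of v2 on the same side of v2 would then be adjacent, giving a
   triangle with v2; so v2 has at most one neighbour on each side, i.e. degree
   at most 2. *)

Lemma irreflexive_edge_neq (T : eqType) (e : rel T) (x y : T) :
  irreflexive e -> e x y -> x != y.
Proof. by move=> e_irr; apply: contraTneq => ->; rewrite e_irr. Qed.

Lemma triangle_has_cycle (T : finType) (e : rel T) (x y z : T) :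
  irreflexive e -> e x y -> e y z -> e z x -> has_cycle e.
Proof.
move=> e_irr exy eyz ezx; have neq := irreflexive_edge_neq e_irr.
exists x, [:: y; z]; split=> //=; first by rewrite exy eyz.
by rewrite !inE negb_or (neq _ _ exy) eq_sym (neq _ _ ezx) (neq _ _ eyz).
Qed.

Lemma path_jumps_over (T : eqType) (e : rel T) (f : T -> nat) (k : nat)
    (x : T) (p : seq T) :
  path e x p -> f x < k < f (last x p) -> k \notin map f (x :: p) ->
  exists r t, [/\ r \in x :: p, t \in x :: p, e r t, f r < k & k < f t].
Proof.
elim: p x => [|y p IH] x /=; first by move=> _ /andP[/ltn_trans H /H]; rewrite ltnn.
move=> /andP[exy py] /andP[fxk fkl]; rewrite !inE negb_or => /andP[kfx kfp].
have [fyk|fky] := ltnP (f y) k.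
  have [r [t [rp tp ert frk fkt]]] := IH y py (introT andP (conj fyk fkl)) kfp.
  by exists r, t; split; rewrite // in_cons ?rp ?tp orbT.
move: kfp; rewrite negb_or => /andP[kfy _].
by exists x, y; split; rewrite ?inE ?eqxx ?orbT // ltn_neqAle kfy.
Qed.

Lemma ord2_eq (i j k : 'I_2) : i != k -> j != k -> i = j.
Proof.
by case: i j k => [[|[|//]] ?] [[|[|//]] ?] [[|[|//]] ?] //= *; apply: val_inj.
Qed.

Section StronglyConsistentTwoClasses.

Variables (T : finType) (e : rel T) (ord : T -> nat) (cls : T -> 'I_2).
Hypotheses (e_sym : symmetric e) (e_irr : irreflexive e) (acyclic : ~ has_cycle e).
Hypothesis consistent : strongly_consistent e ord cls.

Lemma no_triangle x y z : e x y -> e y z -> e z x -> False.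
Proof. by move=> exy eyz ezx; apply: acyclic; apply: triangle_has_cycle exy eyz ezx. Qed.

Lemma consistent_left r s t :
  ord r < ord s -> ord s < ord t -> e r t -> cls r = cls s -> e s t.
Proof. by move=> rs st ert; case: (consistent.2 r s t rs st ert). Qed.

Lemma consistent_right r s t :
  ord r < ord s -> ord s < ord t -> e r t -> cls s = cls t -> e r s.
Proof. by move=> rs st ert; case: (consistent.2 r s t rs st ert). Qed.

Lemma ord_ltgt x y : x != y -> (ord x < ord y) || (ord y < ord x).
Proof.
move=> nxy; rewrite -neq_ltn; apply: contra nxy => /eqP oxy.
by rewrite (consistent.1 _ _ oxy).
Qed.

Section JumpedVertex.

Variables (s r t : T).
Hypotheses (rs : ord r < ord s) (st : ord s < ord t) (ert : e r t).
Hypotheses (nrs : ~~ e r s) (nst : ~~ e s t).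

Lemma jumped_class_r : cls r != cls s.
Proof. exact: contraNneq (consistent_left rs st ert) nst. Qed.

Lemma jumped_class_t : cls t != cls s.
Proof. exact: contraNneq (fun cts => consistent_right rs st ert (esym cts)) nrs. Qed.

Lemma jumped_neighbour_class a : e s a -> cls a = cls s.
Proof.
move=> esa; have crt : cls r = cls t := ord2_eq jumped_class_r jumped_class_t.
have [//|cas] := eqVneq (cls a) (cls s); exfalso.
have car : cls a = cls r := ord2_eq cas jumped_class_r.
have anr : a != r by apply: (contraNneq _ nrs) => <-; rewrite e_sym.
have ant : a != t by apply: (contraNneq _ nst) => <-.
have [lt_ar|lt_ra] := orP (ord_ltgt anr).
  have eas : e a s by rewrite e_sym.
  by move: nrs; rewrite (consistent_left lt_ar rs eas car).
have [lt_at|lt_ta] := orP (ord_ltgt ant); last first.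
  by move: nst; rewrite (consistent_right st lt_ta esa (esym (etrans car crt))).
apply: (@no_triangle r a t); last by rewrite e_sym.
- exact: (consistent_right lt_ra lt_at ert (etrans car crt)).
- exact: (consistent_left lt_ra lt_at ert (esym car)).
Qed.

End JumpedVertex.

Section MonochromaticNeighbourhood.

Variable s : T.
Hypothesis nbr_cls : forall a, e s a -> cls a = cls s.

Lemma same_side_neighbours_adjacent a b :
  e s a -> e s b -> ord a < ord b -> (ord a < ord s) = (ord b < ord s) -> e a b.
Proof.
move=> esa esb ab side; have [bs|sb] := ltnP (ord b) (ord s).
  have eas : e a s by rewrite e_sym.
  exact: consistent_right ab bs eas (nbr_cls esb).
have sa : ord s < ord a.
  by have /orP[//|] := ord_ltgt (irreflexive_edge_neq e_irr esa); rewrite side ltnNge sb.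
exact: consistent_left sa ab esb (esym (nbr_cls esa)).
Qed.

Lemma same_side_neighbour_unique a b :
  e s a -> e s b -> (ord a < ord s) = (ord b < ord s) -> a = b.
Proof.
move=> esa esb side; have [//|nab] := eqVneq a b; exfalso.
have [eas ebs] : e a s /\ e b s by rewrite !(e_sym _ s).
have /orP[ab|ba] := ord_ltgt nab.
  exact: no_triangle (same_side_neighbours_adjacent esa esb ab side) ebs esa.
exact: no_triangle (same_side_neighbours_adjacent esb esa ba (esym side)) eas esb.
Qed.

Lemma monochromatic_neighbourhood_deg : deg e s <= 2.
Proof.
rewrite /deg -(cardsID [set w | ord w < ord s]) -[2]/(1 + 1) leq_add //.
  apply/card_le1_eqP => a b; rewrite !inE => /andP[esa ltas] /andP[esb ltbs].
  by apply: same_side_neighbour_unique; rewrite ?ltas ?ltbs.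
apply/card_le1_eqP => a b; rewrite !inE => /andP[/negbTE leas esa] /andP[/negbTE lebs esb].
by apply: same_side_neighbour_unique; rewrite ?leas ?lebs.
Qed.

End MonochromaticNeighbourhood.

End StronglyConsistentTwoClasses.

Theorem corollaryA10 (T : finType) (e : rel T)
    (ord : T -> nat) (cls : T -> 'I_2) (v1 v2 v3 : T) (p : seq T) :
  is_tree e -> pthin_eq e 2 ->
  strongly_consistent e ord cls ->
  ord v1 < ord v2 -> ord v2 < ord v3 -> deg e v2 = 3 ->
  simple_path e v1 v3 p ->
  v2 \in v1 :: p \/ exists2 w, w \in v1 :: p & e w v2.
Proof.
move=> [[e_sym e_irr] _ acyclic] _ consistent v12 v23 deg3 [pathp lastp _].
have [v2p|v2p] := boolP (v2 \in v1 :: p); first by left.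
have [/hasP[w wp ew]|/hasPn nadj] := boolP (has (e^~ v2) (v1 :: p)).
  by right; exists w.
have v2off : ord v2 \notin map ord (v1 :: p).
  by apply: contra v2p => /mapP[w wp /(consistent.1 _ _) ->].
have v13 : ord v1 < ord v2 < ord (last v1 p) by rewrite lastp v12 v23.
have [r [t [rp tp ert rv2 v2t]]] := path_jumps_over pathp v13 v2off.
have nrv2 : ~~ e r v2 := nadj r rp.
have nv2t : ~~ e v2 t by rewrite e_sym nadj.
have := monochromatic_neighbourhood_deg e_sym e_irr acyclic consistent
  (jumped_neighbour_class e_sym e_irr acyclic consistent rv2 v2t ert nrv2 nv2t).
by rewrite deg3.
Qed.
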